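(* Let $G$ be an almost well-covered graph of girth at least $6$. Then no vertex of $G_2$ is adjacent to a vertex of $G_0$.
   Context: All graphs are finite and simple. The girth is the length of a shortest cycle (infinite for acyclic graphs). For a graph $G$, $\alpha(G)$ is the maximum size of an independent set and $i(G)$ the minimum size of an inclusion-maximal independent set; $G$ is almost well-covered if $\alpha(G)-i(G)=1$. Types of vertices: let $U$ be the set of vertices of $G$ whose connected component is a complete graph. In $G-U$, vertices of degree $1$ are leaves and the others are internal vertices. An internal vertex adjacent to exactly $k$ leaves is of type $k$; every vertex of $U$ is of type $0$. $G_i$ denotes the subgraph of $G$ induced by all vertices of type $i$. *)

From mathcomp Require Import all_boot.
Set Implicit Arguments. Unset Strict Implicit. Unset Printing Implicit Defensive.

Section Graph.
Variables (T : finType) (e : rel T).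

Definition simple_graph : Prop := symmetric e /\ irreflexive e.

(* girth >= k: every cycle (>= 3 distinct vertices, consecutive ones adjacent,
   last adjacent to first) has length >= k. Acyclic graphs satisfy it. *)
Definition girth_ge (k : nat) : Prop :=
  forall s : seq T, uniq s -> 3 <= size s -> cycle e s -> k <= size s.

Definition independent (A : {set T}) : bool :=
  [forall x in A, forall y in A, ~~ e x y].

Definition maximal_independent (A : {set T}) : bool :=
  independent A && [forall x, (x \notin A) ==> ~~ independent (x |: A)].

Definition alpha : nat := \max_(A : {set T} | independent A) #|A|.

(* i(G): minimum size of an inclusion-maximal independent set
   (one always exists; #|T| is just the neutral element of the min) *)
Definition indep_domination : nat :=
  \big[minn/#|T|]_(A : {set T} | maximal_independent A) #|A|.

Definition almost_well_covered : Prop := alpha = (indep_domination + 1)%N.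

Definition in_U (x : T) : bool :=
  [forall y, forall z, (connect e x y && connect e x z && (y != z)) ==> e y z].

Definition degGU (x : T) : nat := #|[set y | e x y & ~~ in_U y]|.

Definition leaf (x : T) : bool := ~~ in_U x && (degGU x == 1).
Definition internal (x : T) : bool := ~~ in_U x && (degGU x != 1).

Definition of_type (k : nat) (x : T) : bool :=
  (in_U x && (k == 0)) || (internal x && (#|[set y | e x y & leaf y]| == k)).

End Graph.

(* Let x of type 2 be adjacent to y of type 0. Then y is internal, and so is
   each neighbour z of y, which therefore has a neighbour w other than y.
   Girth at least 6 makes x together with all such w (for z <> x) an
   independent set; a maximal independent set M extending it meets the
   neighbourhood of y only in x. Exchanging x in M for y and the two leaves
   at x gives an independent set of size |M| + 2 >= i(G) + 2 > alpha(G). *)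
From mathcomp Require Import all_boot all_order zify.
Set Implicit Arguments. Unset Strict Implicit. Unset Printing Implicit Defensive.
Import Order.TTheory.

Section IndependentSets.
Variables (T : finType) (e : rel T).
Hypothesis esym : symmetric e.
Hypothesis eirr : irreflexive e.

Lemma independentP (A : {set T}) :
  reflect {in A &, forall x y, ~~ e x y} (independent e A).
Proof.
apply: (iffP forall_inP) => [indA x y xA yA | indA x xA].
  by move/forall_inP: (indA x xA); apply.
by apply/forall_inP => y yA; apply: indA.
Qed.

Lemma maximal_independent_extend (S : {set T}) :
  independent e S -> exists2 M, maximal_independent e M & S \subset M.
Proof.
move=> indS; have [M maxM sSM] := maxset_exists indS.
exists M => //; rewrite /maximal_independent (maxsetp maxM) /=.
apply/forallP => z; apply/implyP => zM; apply: contra zM => indzM.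
by rewrite -(maxsetsup maxM indzM (subsetUr _ _)) setU11.
Qed.

Lemma indep_domination_le M : maximal_independent e M -> indep_domination e <= #|M|.
Proof.
move=> maxM; rewrite /indep_domination -minEnat -leEnat.
exact: ge_bigmin_seq (mem_index_enum M) maxM.
Qed.

Lemma alpha_ge A : independent e A -> #|A| <= alpha e.
Proof. exact: leq_bigmax_cond. Qed.

Lemma exchange_le_alpha (M A : {set T}) x :
  independent e M -> x \in M -> {in A, forall u, e u x} ->
  {in A, forall u, {in A :|: M, forall v, e u v -> v = x}} ->
  #|A| + #|M| <= alpha e + 1.
Proof.
move=> indM xM Ax Anbr.
have AM0 : A :&: M = set0.
  apply/setP => u; rewrite !inE; apply/andP => -[uA uM].
  by move/independentP: indM => /(_ u x uM xM); rewrite Ax.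
have xNA : x \notin A by apply/negP => /Ax; rewrite eirr.
have indK : independent e (A :|: M :\ x).
  apply/independentP => u v; rewrite !inE.
  wlog uA : u v / u \in A => [wlog uK vK|].
    have [uA | uNA] := boolP (u \in A); first exact: wlog.
    have [vA | vNA] := boolP (v \in A); first by rewrite esym; apply: wlog.
    move: uK vK; rewrite (negbTE uNA) (negbTE vNA) => /andP[_ uM] /andP[_ vM].
    by move/independentP: indM; apply.
  move=> _ vK; have vAM : v \in A :|: M.
    by rewrite inE; case/orP: vK => [-> | /andP[_ ->]]; rewrite ?orbT.
  by apply/negP => /(Anbr u uA v vAM) vx; move: vK; rewrite vx eqxx (negbTE xNA).
have := alpha_ge indK; rewrite cardsU (cardsD1 x M) xM.
suff -> : A :&: (M :\ x) = set0 by rewrite cards0; lia.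
by apply/eqP; rewrite -subset0 -AM0 setIS // subD1set.
Qed.

End IndependentSets.

Section Girth.
Variables (T : finType) (e : rel T).
Hypothesis eirr : irreflexive e.

Lemma adj_neq p q : e p q -> p != q.
Proof. by apply: contraTneq => ->; rewrite eirr. Qed.

Lemma girth_geW k1 k2 : k1 <= k2 -> girth_ge e k2 -> girth_ge e k1.
Proof. by move=> k12 g s us s3 cs; apply: leq_trans k12 (g s us s3 cs). Qed.

Lemma no_triangle p q r : girth_ge e 4 -> e p q -> e q r -> ~~ e r p.
Proof.
move=> g pq qr; apply/negP => rp; have := g [:: p; q; r].
rewrite /= pq qr rp !inE !negb_or (adj_neq pq) (adj_neq qr) eq_sym (adj_neq rp).
by move=> /(_ isT isT isT).
Qed.

Lemma no_4cycle p q r s : girth_ge e 5 -> p != r -> q != s ->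
  e p q -> e q r -> e r s -> ~~ e s p.
Proof.
move=> g pr qs pq qr rs; apply/negP => sp; have := g [:: p; q; r; s].
rewrite /= pq qr rs sp !inE !negb_or pr qs (adj_neq pq) (adj_neq qr) (adj_neq rs).
by rewrite eq_sym (adj_neq sp) => /(_ isT isT isT).
Qed.

(* A closed 5-walk that is not a 5-cycle repeats two vertices at distance
   two along it, and the remaining three vertices form a triangle. *)
Lemma no_closed_5walk p q r s t : girth_ge e 6 ->
  e p q -> e q r -> e r s -> e s t -> ~~ e t p.
Proof.
move=> g pq qr rs st; apply/negP => tp.
have tri a b c := @no_triangle a b c (girth_geW (isT : 4 <= 6) g).
case: (eqVneq p r) => [?|pr]; first by subst; apply: negP (tri _ _ _ rs st) tp.
case: (eqVneq p s) => [?|ps]; first by subst; apply: negP (tri _ _ _ pq qr) rs.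
case: (eqVneq q s) => [?|qs]; first by subst; apply: negP (tri _ _ _ st tp) pq.
case: (eqVneq q t) => [?|qt]; first by subst; apply: negP (tri _ _ _ qr rs) st.
case: (eqVneq r t) => [?|rt]; first by subst; apply: negP (tri _ _ _ pq qr) tp.
have := g [:: p; q; r; s; t].
rewrite /= pq qr rs st tp !inE !negb_or pr ps qs qt rt (adj_neq pq) (adj_neq qr).
by rewrite (adj_neq rs) (adj_neq st) eq_sym (adj_neq tp) => /(_ isT isT isT).
Qed.

End Girth.

Section VertexTypes.
Variables (T : finType) (e : rel T).
Hypothesis esym : symmetric e.

Lemma in_U_edge u v : e u v -> in_U e u -> in_U e v.
Proof.
move=> uv /forallP Uu; apply/forallP => y; apply/forallP => z.
apply/implyP => /andP[/andP[vy vz] yz]; move/forallP/(_ z)/implyP: (Uu y); apply.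
by rewrite yz andbT !(connect_trans (connect1 uv)).
Qed.

Lemma in_U_adj u v : e u v -> in_U e u = in_U e v.
Proof. by move=> uv; apply/idP/idP; apply: in_U_edge; rewrite // esym. Qed.

Lemma leaf_adj_eq l u v : leaf e l -> e l u -> e l v -> u = v.
Proof.
case/andP=> nUl /cards1P[c Nl] lu lv.
have inN w : e l w -> w \in [set w | e l w & ~~ in_U e w].
  by move=> lw; rewrite inE lw -(in_U_adj lw).
by move: (inN u lu) (inN v lv); rewrite Nl !inE => /eqP-> /eqP->.
Qed.

Lemma internal_adj_other z y : internal e z -> e z y -> exists2 w, e z w & w != y.
Proof.
case/andP=> nUz degz zy; have nUy : ~~ in_U e y by rewrite -(in_U_adj zy).
case: (pickP [pred w | e z w && (w != y)]) => [w /andP[zw wy] | none]; first by exists w.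
case/negP: degz; apply/cards1P; exists y; apply/setP => w; rewrite !inE.
case: (eqVneq w y) => [-> | wy]; first by rewrite zy nUy.
by move: (none w) => /=; rewrite wy andbT => ->.
Qed.

Lemma of_type2E x :
  of_type e 2 x = internal e x && (#|[set l | e x l & leaf e l]| == 2).
Proof. by rewrite /of_type andbF. Qed.

Lemma of_type0_internal y : ~~ in_U e y -> of_type e 0 y ->
  internal e y /\ forall z, e y z -> internal e z.
Proof.
move=> nUy; rewrite /of_type (negbTE nUy) /= => /andP[iy /eqP/cards0_eq N0].
split=> // z yz; have nUz : ~~ in_U e z by rewrite -(in_U_adj yz).
have : z \notin [set l | e y l & leaf e l] by rewrite N0 inE.
by rewrite inE yz /leaf /internal nUz.
Qed.

End VertexTypes.

Section SecondNeighbourhood.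
Variables (T : finType) (e : rel T).
Hypotheses (esym : symmetric e) (eirr : irreflexive e) (girth6 : girth_ge e 6).

Definition second_nbhd (y x : T) : {set T} :=
  [set w | w != y & [exists z, [&& e y z, z != x & e z w]]].

(* An edge x-w would close the 4-cycle x-y-z-w, and an edge w1-w2 the
   closed walk y-z1-w1-w2-z2-y of length 5. *)
Lemma independent_second_nbhd x y : e x y -> independent e (x |: second_nbhd y x).
Proof.
move=> xy.
have xS w : w \in second_nbhd y x -> ~~ e w x.
  rewrite inE => /andP[wy /existsP[z /and3P[yz zx zw]]].
  by apply: (no_4cycle eirr (girth_geW (isT : 5 <= 6) girth6) _ _ xy yz zw); rewrite eq_sym.
have SS w1 w2 : w1 \in second_nbhd y x -> w2 \in second_nbhd y x -> ~~ e w1 w2.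
  rewrite !inE => /andP[_ /existsP[z1 /and3P[yz1 _ z1w1]]].
  move=> /andP[_ /existsP[z2 /and3P[yz2 _ z2w2]]]; apply/negP => w12.
  have w2z2 : e w2 z2 by rewrite esym.
  by move: (no_closed_5walk eirr girth6 yz1 z1w1 w12 w2z2); rewrite esym yz2.
apply/independentP => u v /setU1P[-> | uS] /setU1P[-> | vS].
- by rewrite eirr.
- by rewrite esym xS.
- exact: xS.
- exact: SS.
Qed.

Lemma exists_maximal_independent_nbhd1 x y : e x y ->
  (forall z, e y z -> exists2 w, e z w & w != y) ->
  exists2 M, maximal_independent e M & [set m in M | e y m] = [set x].
Proof.
move=> xy ext.
have [M maxM sSM] := maximal_independent_extend (independent_second_nbhd xy).
have /independentP indM : independent e M by case/andP: maxM.
exists M => //; apply/setP => m; rewrite !inE.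
case: (eqVneq m x) => [-> | mx].
  by rewrite (subsetP sSM) ?setU11 // esym.
apply/negbTE/andP => -[mM ym]; have [w mw wy] := ext m ym.
have wS : w \in second_nbhd y x by rewrite inE wy; apply/existsP; exists m; rewrite ym mx.
have wM : w \in M by rewrite (subsetP sSM) // setU1r.
by move: (indM m w mM wM); rewrite mw.
Qed.

End SecondNeighbourhood.

Theorem lemma13 (T : finType) (e : rel T) :
  simple_graph e -> girth_ge e 6 -> almost_well_covered e ->
  forall x y : T, of_type e 2 x -> of_type e 0 y -> ~~ e x y.
Proof.
move=> [esym eirr] girth6 awc x y; rewrite of_type2E => /andP[ix /eqP L2] ty.
apply/negP => xy.
have nUy : ~~ in_U e y by rewrite -(in_U_adj esym xy); case/andP: ix.
have [iy iNy] := of_type0_internal esym nUy ty.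
have other_nbr z : e y z -> exists2 w, e z w & w != y.
  by move=> yz; apply: (internal_adj_other esym (iNy z yz)); rewrite esym.
have [M maxM MyE] := exists_maximal_independent_nbhd1 esym eirr girth6 xy other_nbr.
have xM : x \in M by have := set11 x; rewrite -MyE inE => /andP[].
pose L := [set l | e x l & leaf e l].
have yNL : y \notin L by rewrite inE /leaf; case/andP: iy => _ /negbTE ->; rewrite !andbF.
have nbr_x : {in y |: L, forall u, {in y |: L :|: M, forall v, e u v -> v = x}}.
  move=> u /setU1P[-> | ]; last first.
    by rewrite inE => /andP[xu lu] v _ uv; apply: (leaf_adj_eq esym lu uv); rewrite esym.
  move=> v /setUP[/setU1P[-> | vL] | vM] yv; first by rewrite eirr in yv.
    move: vL; rewrite inE => /andP[xv lv].
    by move: xy; rewrite (leaf_adj_eq esym lv (_ : e v y) (_ : e v x)) ?eirr // esym.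
  by apply/set1P; rewrite -MyE inE vM yv.
have Ax : {in y |: L, forall u, e u x}.
  by move=> u /setU1P[-> | ]; [rewrite esym | rewrite inE esym => /andP[]].
have := exchange_le_alpha esym eirr (andP maxM).1 xM Ax nbr_x.
have := indep_domination_le maxM.
rewrite cardsU1 yNL L2 awc; lia.
Qed.
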